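(* Let $R>0$ and $f$ be as defined below. For all $d\ge0$ and $r\ge R$, $$f(d,r)\le f_\sqcap(d,r):=\frac2R\mathbb{1}_{[d-R,d+R]}(r),$$ $$f(d,r)\ge f_\wedge(d,r):=\frac{2(R-d+r)}{\pi R^2}\mathbb{1}_{(d-R,d)}(r)+\frac{2(d+R-r)}{\pi R^2}\mathbb{1}_{[d,d+R)}(r).$$
   Context: For $d\ge0$, $r\ge0$: $f(d,r)=2r/R^2$ if $r\le R-d$; $f(d,r)=0$ if $r>R+d$ or $r<d-R$; and $f(d,r)=\frac{2r}{\pi R^2}\arccos\big(\frac{d^2+r^2-R^2}{2dr}\big)$ otherwise. (This is the $r$-derivative of $|B_r(0)\cap B_R(\mathbf{y})|/(\pi R^2)$ with $|\mathbf{y}|=d$.) *)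

From Stdlib Require Import Reals.
Open Scope R_scope.

Definition fdr (Rad d r : R) : R :=
  if Rle_dec r (Rad - d) then 2 * r / Rad ^ 2
  else if Rlt_dec (Rad + d) r then 0
  else if Rlt_dec r (d - Rad) then 0
  else 2 * r / (PI * Rad ^ 2) * acos ((d ^ 2 + r ^ 2 - Rad ^ 2) / (2 * d * r)).

Definition ind_cc (a b x : R) : R :=
  if Rle_dec a x then (if Rle_dec x b then 1 else 0) else 0.
Definition ind_oo (a b x : R) : R :=
  if Rlt_dec a x then (if Rlt_dec x b then 1 else 0) else 0.
Definition ind_co (a b x : R) : R :=
  if Rle_dec a x then (if Rlt_dec x b then 1 else 0) else 0.

Definition f_cap (Rad d r : R) : R := 2 / Rad * ind_cc (d - Rad) (d + Rad) r.

Definition f_wedge (Rad d r : R) : R :=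
  2 * (Rad - d + r) / (PI * Rad ^ 2) * ind_oo (d - Rad) d r
  + 2 * (d + Rad - r) / (PI * Rad ^ 2) * ind_co d (d + Rad) r.

(* Away from the degenerate point d = 0, r = R, and for |r - d| <= R, we have
   f(d, r) = 2 r theta / (pi R^2) with theta = acos x, x = (d^2 + r^2 - R^2) / (2 d r) in [0, 1]
   by the law of cosines; elsewhere f, f_wedge vanish.  The upper bound follows from
   theta <= 3 sin theta on [0, pi/2] and r sin theta <= R (a half-chord of the disc of radius R)
   since pi >= 3.  The lower bound amounts to r theta >= R - |r - d|, which follows from
   cos y >= 1 - y^2/2 with y := (R - |r - d|) / r, because x <= 1 - y^2/2. *)
From Stdlib Require Import Reals Lra Psatz.
Open Scope R_scope.

Lemma cos_ge_1_sub_sqr_div2 (a : R) : - PI / 2 <= a <= PI / 2 -> 1 - a ^ 2 / 2 <= cos a.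
Proof.
  intros [Ha1 Ha2].
  destruct (cos_bound a 0 Ha1 Ha2) as [Hlb _].
  unfold cos_approx, cos_term in Hlb; simpl in Hlb.
  eapply Rle_trans; [|exact Hlb]; right; field.
Qed.

Lemma sin_ge_third (a : R) : 0 <= a <= 2 -> a / 3 <= sin a.
Proof.
  intros Ha; pose proof PI2_3_2.
  destruct (SIN a ltac:(lra) ltac:(lra)) as [Hlb _].
  unfold sin_lb, sin_approx, sin_term in Hlb; simpl in Hlb.
  eapply Rle_trans; [|exact Hlb].
  assert (0 <= a * (2/3 - a^2/6)) by (apply Rmult_le_pos; nra).
  assert (0 <= a * (a^4 * (42 - a^2))) by (apply Rmult_le_pos; [lra|]; apply Rmult_le_pos; nra).
  field_simplify; nra.
Qed.

Lemma le_acos (x y : R) : -1 <= x <= 1 -> 0 <= y <= PI -> x <= cos y -> y <= acos x.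
Proof.
  intros Hx Hy Hxy; pose proof (acos_bound x).
  apply cos_decr_0; try lra.
  now rewrite cos_acos.
Qed.

Lemma acos_le_PI2 (x : R) : 0 <= x <= 1 -> acos x <= PI / 2.
Proof.
  intros Hx; pose proof (acos_bound x); pose proof PI2_3_2.
  apply cos_decr_0; try lra.
  rewrite cos_PI2, cos_acos; lra.
Qed.

Lemma acos_le_3_sqrt (x : R) : 0 <= x <= 1 -> acos x <= 3 * sqrt (1 - x ^ 2).
Proof.
  intros Hx; pose proof (acos_bound x); pose proof (acos_le_PI2 x Hx); pose proof PI_4.
  assert (Hsin : acos x / 3 <= sin (acos x)) by (apply sin_ge_third; lra).
  rewrite sin_acos in Hsin by lra.
  unfold Rsqr in Hsin; replace (x ^ 2) with (x * x) by ring; lra.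
Qed.

Section Lens.

Variables Rad d r : R.
Hypotheses (hR : 0 < Rad) (hr : Rad <= r) (hnear : Rad - d < r) (hdist : Rabs (r - d) <= Rad).

Let x := (d ^ 2 + r ^ 2 - Rad ^ 2) / (2 * d * r).

Let hdr : 0 < 2 * d * r.
Proof.
  assert (0 < d) by (unfold Rabs in hdist; destruct Rcase_abs in hdist; lra); nra.
Qed.

Let hdist2 : (r - d) ^ 2 <= Rad ^ 2.
Proof.
  unfold Rabs in hdist; destruct Rcase_abs in hdist; nra.
Qed.

Let hx2dr : x * (2 * d * r) = d ^ 2 + r ^ 2 - Rad ^ 2.
Proof. unfold x; field; split; intros ->; lra. Qed.

Lemma lens_cos_range : 0 <= x <= 1.
Proof.
  split; apply (Rmult_le_reg_r (2 * d * r)); auto; rewrite hx2dr; nra.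
Qed.

Lemma lens_half_chord : r * sqrt (1 - x ^ 2) <= Rad.
Proof.
  rewrite <- (sqrt_pow2 r), <- sqrt_mult_alt by nra.
  rewrite <- (sqrt_pow2 Rad) by lra.
  apply sqrt_le_1_alt.
  (* [(2 d r)^2 (1 - x^2) = (2 d R)^2 - (d^2 + R^2 - r^2)^2] *)
  apply (Rmult_le_reg_l (4 * d ^ 2)); [nra|].
  replace (4 * d ^ 2 * (r ^ 2 * (1 - x ^ 2))) with (4 * d ^ 2 * r ^ 2 - (x * (2 * d * r)) ^ 2)
    by ring.
  rewrite hx2dr; pose proof (pow2_ge_0 (d ^ 2 + Rad ^ 2 - r ^ 2)); nra.
Qed.

Lemma lens_cos_le : x <= 1 - ((Rad - Rabs (r - d)) / r) ^ 2 / 2.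
Proof.
  apply (Rmult_le_reg_r (2 * d * r ^ 2)); [nra|].
  replace (x * (2 * d * r ^ 2)) with (r * (x * (2 * d * r))) by ring.
  replace ((1 - ((Rad - Rabs (r - d)) / r) ^ 2 / 2) * (2 * d * r ^ 2))
    with (2 * d * r ^ 2 - d * (Rad - Rabs (r - d)) ^ 2) by (field; lra).
  rewrite hx2dr; unfold Rabs; destruct Rcase_abs.
  - assert (0 <= (d - r) * ((Rad - (d - r)) * (2 * r - Rad + (d - r)))) by
      (apply Rmult_le_pos; [lra|]; apply Rmult_le_pos; unfold Rabs in hdist;
       destruct Rcase_abs in hdist; lra).
    nra.
  - assert (0 <= (r - d) * ((Rad - (r - d)) * (r - d + Rad + 2 * d))) by
      (apply Rmult_le_pos; [lra|]; apply Rmult_le_pos; unfold Rabs in hdist;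
       destruct Rcase_abs in hdist; lra).
    nra.
Qed.

Lemma lens_angle_bounds : Rad - Rabs (r - d) <= r * acos x <= 3 * Rad.
Proof.
  pose proof lens_cos_range; pose proof (Rabs_pos (r - d)).
  split.
  - set (y := (Rad - Rabs (r - d)) / r).
    assert (hyr : y * r = Rad - Rabs (r - d)) by (unfold y; field; lra).
    assert (0 <= y <= 1).
    { split; apply (Rmult_le_reg_r r); lra. }
    pose proof PI2_3_2; pose proof lens_cos_le as hxy; fold y in hxy.
    assert (y <= acos x).
    { apply le_acos; try lra.
      assert (1 - y ^ 2 / 2 <= cos y) by (apply cos_ge_1_sub_sqr_div2; lra); lra. }
    nra.
  - assert (acos x <= 3 * sqrt (1 - x ^ 2)) by (apply acos_le_3_sqrt; lra).
    pose proof lens_half_chord; nra.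
Qed.

End Lens.

Lemma fdr_lens (Rad d r : R) : 0 < Rad -> Rad <= r -> Rad - d < r -> Rabs (r - d) <= Rad ->
  fdr Rad d r = 2 / (PI * Rad ^ 2) * (r * acos ((d ^ 2 + r ^ 2 - Rad ^ 2) / (2 * d * r))).
Proof.
  intros hR hr hnear hdist; pose proof PI_RGT_0.
  unfold Rabs in hdist; destruct Rcase_abs in hdist.
  all: unfold fdr; destruct Rle_dec; [lra|]; destruct Rlt_dec; [lra|]; destruct Rlt_dec; [lra|].
  all: field; repeat split; try apply pow_nonzero; lra.
Qed.

Lemma fdr_outside (Rad d r : R) : 0 < Rad -> Rad <= r -> 0 <= d -> Rad < Rabs (r - d) ->
  fdr Rad d r = 0.
Proof.
  intros hR hr hd hdist; unfold Rabs in hdist; destruct Rcase_abs in hdist.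
  all: unfold fdr; destruct Rle_dec; [lra|]; destruct Rlt_dec; [reflexivity|].
  all: destruct Rlt_dec; [reflexivity|lra].
Qed.

Lemma f_cap_in (Rad d r : R) : Rabs (r - d) <= Rad -> f_cap Rad d r = 2 / Rad.
Proof.
  intros hdist; unfold Rabs in hdist; destruct Rcase_abs in hdist.
  all: unfold f_cap, ind_cc; destruct Rle_dec; [|lra]; destruct Rle_dec; [ring|lra].
Qed.

Lemma f_cap_nonneg (Rad d r : R) : 0 < Rad -> 0 <= f_cap Rad d r.
Proof.
  intros hR; assert (0 < 2 / Rad) by (apply Rdiv_lt_0_compat; lra).
  unfold f_cap, ind_cc; repeat destruct Rle_dec; lra.
Qed.

Lemma f_wedge_tent (Rad d r : R) :
  f_wedge Rad d r = 2 / (PI * Rad ^ 2) * Rmax 0 (Rad - Rabs (r - d)).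
Proof.
  unfold f_wedge, ind_oo, ind_co, Rmax, Rabs, Rdiv.
  repeat destruct Rle_dec; repeat destruct Rlt_dec; destruct Rcase_abs; try lra; try ring.
  (* the endpoints [r = d +- Rad], where the tent vanishes *)
  all: match goal with |- _ = _ * ?t => replace t with 0 by lra end; ring.
Qed.

Lemma two_div_PI_sqr_mul_3_le (Rad : R) : 0 < Rad -> 2 / (PI * Rad ^ 2) * (3 * Rad) <= 2 / Rad.
Proof.
  intros hR; pose proof PI2_3_2.
  enough (0 <= 2 / Rad - 2 / (PI * Rad ^ 2) * (3 * Rad)) by lra.
  replace (2 / Rad - 2 / (PI * Rad ^ 2) * (3 * Rad)) with (2 * (PI - 3) / (PI * Rad))
    by (field; lra).
  apply Rle_mult_inv_pos; nra.
Qed.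

Theorem lemma4p8 (Rad : R) (hR : 0 < Rad) :
  forall d r : R, 0 <= d -> Rad <= r ->
    fdr Rad d r <= f_cap Rad d r /\ f_wedge Rad d r <= fdr Rad d r.
Proof.
  intros d r hd hr.
  pose proof PI_RGT_0.
  assert (hc : 0 < 2 / (PI * Rad ^ 2))
    by (apply Rdiv_lt_0_compat, Rmult_lt_0_compat, pow_lt; lra).
  rewrite f_wedge_tent.
  destruct (Rle_dec (Rabs (r - d)) Rad) as [hdist|hdist].
  2: { rewrite fdr_outside, Rmax_left by lra; pose proof (f_cap_nonneg Rad d r hR); nra. }
  rewrite f_cap_in by exact hdist.
  destruct (Rlt_dec (Rad - d) r) as [hnear|hnear].
  2: { assert (hrd : r = Rad /\ d = 0) by lra; destruct hrd as [-> ->].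
       unfold fdr; destruct Rle_dec; [|lra].
       rewrite Rminus_0_r, Rabs_pos_eq, Rmax_left by lra.
       replace (2 * Rad / Rad ^ 2) with (2 / Rad) by (field; lra).
       assert (0 < 2 / Rad) by (apply Rdiv_lt_0_compat; lra).
       rewrite Rmult_0_r; split; lra. }
  rewrite fdr_lens by assumption.
  destruct (lens_angle_bounds Rad d r) as [hlow hup]; try assumption.
  set (th := r * acos _) in *.
  split.
  - eapply Rle_trans; [|apply (two_div_PI_sqr_mul_3_le Rad hR)].
    apply Rmult_le_compat_l; lra.
  - apply Rmult_le_compat_l; [lra|]; apply Rmax_lub; pose proof (Rabs_pos (r - d)); lra.
Qed.
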